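(* With the notation of the context, for every $r\in(0,1)$ and $v=(v_1,v_2)\in\mathbb{R}^2$, $$T^Q\big(\rho(r,0),\rho(r+v_1t,v_2t)\big)=G(r,v)\,t^2+O(t^3)\quad\text{as }t\downarrow0,$$ where $$G(r,v)=\max_{\phi\in[0,2\pi)}\frac{\big(2v_1\cos\phi-(2r-1)v_2\sin\phi\big)^2}{16\big(1+(2r-1)\cos\phi\big)}.$$
   Context: For $r\in[0,1]$ and $\theta\in\mathbb{R}$, $\rho(r,\theta)=\tfrac12[\mathbb{1}+(2r-1)(\sigma_1\sin\theta+\sigma_3\cos\theta)]$, with $\sigma_i$ the Pauli matrices. Let $C^Q=\tfrac12(\mathbb{1}-S)$ with $S$ the swap on $\mathbb{C}^2\otimes\mathbb{C}^2$. Define $T^Q(\rho^A,\rho^B)=\min\operatorname{Tr}(C^Q\rho^{AB})$, the minimum taken over density matrices $\rho^{AB}$ on $\mathbb{C}^2\otimes\mathbb{C}^2$ with marginals $\operatorname{Tr}_B\rho^{AB}=\rho^A$ and $\operatorname{Tr}_A\rho^{AB}=\rho^B$. Known formula (assumed): $T^Q(\rho(s,0),\rho(r,\theta))=\max_{\phi\in[0,2\pi)}\tfrac14\big(\sqrt{1+(2s-1)\cos\phi}-\sqrt{1+(2r-1)\cos(\theta+\phi)}\big)^2$. *)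

From HB Require Import structures.
From mathcomp Require Import all_boot all_order all_algebra.
From mathcomp Require Import all_classical all_reals all_analysis.
Set Implicit Arguments. Unset Strict Implicit. Unset Printing Implicit Defensive.
Import Order.TTheory GRing.Theory Num.Theory.
Local Open Scope classical_set_scope.
Local Open Scope ring_scope.

(* T^Q(rho(s,0), rho(r,theta)), given by the known (assumed) formula of the
   context: max over phi in [0, 2 pi) of
   1/4 (sqrt(1+(2s-1)cos phi) - sqrt(1+(2r-1)cos(theta+phi)))^2.
   The max is written as the supremum of the (compact, attained) image. *)
Definition TQ (R : realType) (s r theta : R) : R :=
  sup [set (Num.sqrt (1 + (2 * s - 1) * cos phi)
            - Num.sqrt (1 + (2 * r - 1) * cos (theta + phi))) ^+ 2 / 4
      | phi in `[0, 2 * pi[%classic].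

Definition Gfun (R : realType) (r v1 v2 : R) : R :=
  sup [set (2 * v1 * cos phi - (2 * r - 1) * v2 * sin phi) ^+ 2
            / (16 * (1 + (2 * r - 1) * cos phi))
      | phi in `[0, 2 * pi[%classic].

(* For every angle phi put A := 1 + (2r-1) cos phi, which is at least
   1 - |2r-1| > 0, and let B be the same expression for the perturbed state.
   Uniformly in phi, B - A = t g(phi) + O(t^2) with
   g(phi) = 2 v1 cos phi - (2r-1) v2 sin phi, and since
   (sqrt A - sqrt B)^2 = (B - A)^2 / (sqrt A + sqrt B)^2, the function maximised
   in T^Q equals t^2 g^2 / (16 A) + O(t^3) uniformly in phi.  Suprema of
   uniformly close functions are equally close. *)

From HB Require Import structures.
From mathcomp Require Import all_boot all_order all_algebra.
From mathcomp Require Import all_classical all_reals all_analysis.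
From mathcomp Require Import ring lra.
Set Implicit Arguments. Unset Strict Implicit. Unset Printing Implicit Defensive.
Import Order.TTheory GRing.Theory Num.Theory.
Local Open Scope classical_set_scope.
Local Open Scope ring_scope.

Section RealBounds.
Variable R : realType.
Implicit Types x : R.

Lemma ler_norm_subr0_deriv (f df : R -> R) (M x : R) :
  (forall y, is_derive y (1 : R) f (df y)) ->
  (forall c, `|c| <= `|x| -> `|df c| <= M) ->
  `|f x - f 0| <= M * `|x|.
Proof.
move=> f_df dfM.
have f_cont (i : interval R) :=
  @derivable_within_continuous R R f i (fun y _ => @ex_derive _ _ _ _ _ _ _ (f_df y)).
have [x0|x0] := leP 0 x.
  have [c + ->] := MVT_segment x0 (fun y _ => f_df y) (f_cont `[0, x]).
  rewrite in_itv /= => /andP[c0 cx].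
  rewrite subr0 normrM (ger0_norm x0) ler_wpM2r // dfM //.
  by rewrite (ger0_norm x0) ger0_norm.
have x0' : x <= 0 by exact: ltW.
have [c + fxE] := MVT_segment x0' (fun y _ => f_df y) (f_cont `[x, 0]).
rewrite in_itv /= => /andP[xc c0].
rewrite distrC fxE sub0r normrM normrN (ler0_norm x0') ler_wpM2r ?oppr_ge0 //.
by rewrite dfM // (ler0_norm x0') ler0_norm // lerN2.
Qed.

Lemma ler_norm_sin x : `|sin x| <= `|x|.
Proof.
have := @ler_norm_subr0_deriv sin cos 1 x (fun y => is_derive_sin y).
by rewrite sin0 subr0 mul1r; apply => c _; exact: cos_max.
Qed.

Lemma ler_norm_cosB1 x : `|cos x - 1| <= `|x| ^+ 2.
Proof.
have := @ler_norm_subr0_deriv cos (fun y => - sin y) `|x| x (fun y => is_derive_cos y).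
rewrite cos0 -expr2; apply => c cx; rewrite normrN.
exact: le_trans (ler_norm_sin c) cx.
Qed.

Lemma ler_norm_sinB x : `|sin x - x| <= `|x| ^+ 3.
Proof.
have sinB_deriv y : is_derive y (1 : R) (fun y => sin y - y) (cos y - 1).
  exact: is_deriveB.
have := @ler_norm_subr0_deriv _ _ (`|x| ^+ 2) x sinB_deriv.
rewrite sin0 !subr0 -exprSr; apply => c cx.
apply: le_trans (ler_norm_cosB1 c) _.
by rewrite ler_pXn2r // nnegrE.
Qed.

Lemma ler_norm_cosM_sinMB (phi p q : R) :
  `|cos phi * p - sin phi * q| <= `|p| + `|q|.
Proof.
apply: le_trans (ler_normB _ _) _; rewrite !normrM.
by apply: lerD; rewrite ler_piMl // ?cos_max ?sin_max.
Qed.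

(* With [w := sqrt B - sqrt A] and [D := B - A = w (sqrt A + sqrt B)], one has
   [(sqrt A - sqrt B)^2 / 4 - L^2 / (16 A) = (D - L - w^2) (2 sqrt A w + L) / (16 A)],
   and [|w| sqrt A <= |D|] controls [w]. *)
Lemma sqr_sqrtB_approx (A B L e d m : R) :
  0 < m -> m <= A -> 0 <= B -> `|B - A - L| <= e -> `|B - A| <= d ->
  `|(Num.sqrt A - Num.sqrt B) ^+ 2 / 4 - L ^+ 2 / (16 * A)|
     <= (e + d ^+ 2 / m) * (2 * d + `|L|) / (16 * m).
Proof.
move=> m_gt0 mA B_ge0 DLe Dd.
have A_gt0 : 0 < A := lt_le_trans m_gt0 mA.
set x := Num.sqrt A; set y := Num.sqrt B; set w := y - x.
have x_ge0 : 0 <= x := sqrtr_ge0 A.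
have xx : x ^+ 2 = A by rewrite sqr_sqrtr // ltW.
have yy : y ^+ 2 = B by rewrite sqr_sqrtr.
have diffE : (x - y) ^+ 2 / 4 - L ^+ 2 / (16 * A)
    = ((B - A - L) - w ^+ 2) * (2 * x * w + L) / (16 * A).
  by rewrite -xx -yy /w; field; rewrite gt_eqF // sqrtr_gt0.
have wx_le : `|w| * x <= d.
  apply: le_trans Dd.
  have -> : B - A = w * (y + x) by rewrite -xx -yy /w; ring.
  rewrite normrM (ger0_norm (addr_ge0 (sqrtr_ge0 B) x_ge0)).
  by rewrite ler_wpM2l // lerDr sqrtr_ge0.
have d_ge0 : 0 <= d := le_trans (normr_ge0 _) Dd.
have ww_le : w ^+ 2 <= d ^+ 2 / m.
  rewrite ler_pdivlMr // -(real_normK (num_real w)).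
  apply: le_trans (_ : `|w| ^+ 2 * A <= _); first by rewrite ler_wpM2l.
  by rewrite -xx -exprMn ler_pXn2r // nnegrE mulr_ge0.
rewrite diffE normrM normfV normrM (ger0_norm (_ : 0 <= 16 * A)); last first.
  by rewrite mulr_ge0 // ltW.
apply: le_trans (_ : `|B - A - L - w ^+ 2| * `|2 * x * w + L| / (16 * m) <= _).
  by rewrite ler_wpM2l ?mulr_ge0 // lef_pV2 ?posrE ?mulr_gt0 // ler_wpM2l.
apply: ler_wpM2r; first by rewrite invr_ge0 mulr_ge0 // ltW.
apply: ler_pM => //.
  apply: le_trans (ler_normB _ _) _.
  by rewrite lerD // ger0_norm ?sqr_ge0.
apply: le_trans (ler_normD _ _) _; rewrite lerD2r -mulrA normrM normrM.
by rewrite ger0_norm // (ger0_norm x_ge0) ler_wpM2l // mulrC.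
Qed.

Lemma sup_image_approx (S : set R) (F H : R -> R) (k e M : R) :
  S !=set0 -> 0 < k -> (forall p, S p -> H p <= M) ->
  (forall p, S p -> `|F p - k * H p| <= e) ->
  `|sup [set F p | p in S] - k * sup [set H p | p in S]| <= e.
Proof.
move=> [p0 Sp0] k_gt0 HM FH.
have F_le p : S p -> F p <= k * H p + e.
  by move=> Sp; move: (FH p Sp); rewrite ler_norml => /andP[]; lra.
have F_ge p : S p -> k * H p - e <= F p.
  by move=> Sp; move: (FH p Sp); rewrite ler_norml => /andP[]; lra.
have supH : has_sup [set H p | p in S].
  by split; [exists (H p0), p0 | exists M => _ [p Sp <-]; exact: HM].
have supF : has_sup [set F p | p in S].
  split; first by exists (F p0), p0.
  exists (k * M + e) => _ [p Sp <-]; apply: le_trans (F_le p Sp) _.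
  by rewrite lerD2r ler_wpM2l //; [exact: ltW | exact: HM].
rewrite ler_norml; apply/andP; split.
  suff : sup [set H p | p in S] <= (sup [set F p | p in S] + e) / k.
    by rewrite ler_pdivlMr // => ?; lra.
  apply: ge_sup; first by exists (H p0), p0.
  move=> _ [p Sp <-]; rewrite ler_pdivlMr //.
  have : F p <= sup [set F p | p in S] by apply: sup_upper_bound => //; exists p.
  by have := F_ge p Sp; lra.
suff : sup [set F p | p in S] <= k * sup [set H p | p in S] + e by lra.
apply: ge_sup; first by exists (F p0), p0.
move=> _ [p Sp <-]; apply: le_trans (F_le p Sp) _.
rewrite lerD2r ler_wpM2l //; first exact: ltW.
by apply: sup_upper_bound => //; exists p.
Qed.

End RealBounds.

Section Expansion.
Variables (R : realType) (r v1 v2 : R).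
Hypothesis r01 : 0 < r < 1.

Let a := 2 * r - 1.
Let V := `|v1| + `|v2| + 1.
Let m := 1 - `|a|.
Let A phi := 1 + a * cos phi.
Let B t phi := 1 + (2 * (r + v1 * t) - 1) * cos (v2 * t + phi).
Let g phi := 2 * v1 * cos phi - a * v2 * sin phi.

Lemma norm_a_lt1 : `|a| < 1.
Proof. by case/andP: r01 => r0 r1; rewrite ltr_norml /a; apply/andP; split; lra. Qed.

Lemma m_gt0 : 0 < m.
Proof. by have := norm_a_lt1; rewrite /m; lra. Qed.

Lemma V_ge1 : 1 <= V.
Proof. by rewrite /V lerDr addr_ge0. Qed.

Lemma A_ge_m phi : m <= A phi.
Proof.
have : `|a * cos phi| <= `|a| by rewrite normrM ler_piMr ?cos_max.
by rewrite ler_norml /m /A => /andP[]; lra.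
Qed.

Lemma norm_g_le phi : `|g phi| <= 3 * V.
Proof.
have -> : g phi = cos phi * (2 * v1) - sin phi * (a * v2) by rewrite /g; ring.
apply: le_trans (ler_norm_cosM_sinMB _ _ _) _.
rewrite !normrM ger0_norm //.
have : `|a| * `|v2| <= `|v2| by rewrite ler_piMl // ltW // norm_a_lt1.
by have := normr_ge0 v1; have := normr_ge0 v2; rewrite /V; lra.
Qed.

Lemma G_integrand_le phi : g phi ^+ 2 / (16 * A phi) <= 9 * V ^+ 2 / (16 * m).
Proof.
have m0 := m_gt0; have Am := A_ge_m phi.
apply: ler_pM; rewrite ?sqr_ge0 ?invr_ge0 ?mulr_ge0 //; try lra.
  rewrite -real_normK ?num_real // (_ : 9 * V ^+ 2 = (3 * V) ^+ 2); last by ring.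
  by rewrite ler_pXn2r ?nnegrE ?norm_g_le // mulr_ge0 // (le_trans ler01 V_ge1).
by rewrite lef_pV2 ?posrE ?mulr_gt0 //; lra.
Qed.

Section SmallTime.
Variable t : R.
Hypotheses (t_ge0 : 0 <= t) (Vt_small : 2 * (V * t) <= m).

Lemma Vt_ge0 : 0 <= V * t.
Proof. by rewrite mulr_ge0 // (le_trans ler01 V_ge1). Qed.

Lemma Vt_le1 : V * t <= 1.
Proof. by have := norm_a_lt1; have := normr_ge0 a; move: Vt_small; rewrite /m; lra. Qed.

Lemma norm_v1t_le : `|v1 * t| <= V * t.
Proof.
rewrite normrM (ger0_norm t_ge0) ler_wpM2r //.
by have := normr_ge0 v2; rewrite /V; lra.
Qed.

Lemma norm_v2t_le : `|v2 * t| <= V * t.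
Proof.
rewrite normrM (ger0_norm t_ge0) ler_wpM2r //.
by have := normr_ge0 v1; rewrite /V; lra.
Qed.

Lemma B_ge0 phi : 0 <= B t phi.
Proof.
have coef_le : `|2 * (r + v1 * t) - 1| <= `|a| + 2 * (V * t).
  have -> : 2 * (r + v1 * t) - 1 = a + 2 * (v1 * t) by rewrite /a; ring.
  apply: le_trans (ler_normD _ _) _.
  by rewrite lerD2l normrM ger0_norm // ler_wpM2l // norm_v1t_le.
have : `|(2 * (r + v1 * t) - 1) * cos (v2 * t + phi)| <= `|a| + 2 * (V * t).
  by apply: le_trans coef_le; rewrite normrM ler_piMr ?cos_max.
by move: Vt_small; rewrite ler_norml /B /m => ? /andP[]; lra.
Qed.

(* Expand [cos (v2 t + phi)] with [cos (v2 t) = 1 + p] and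
   [sin (v2 t) = v2 t + q], where [p = O(t^2)] and [q = O(t^3)]. *)
Lemma B_sub_A_linear phi : `|B t phi - A phi - t * g phi| <= 6 * (V * t) ^+ 2.
Proof.
set s := V * t.
set p := cos (v2 * t) - 1; set q := sin (v2 * t) - v2 * t.
have BAE : B t phi - A phi - t * g phi
    = a * (cos phi * p - sin phi * q)
      + 2 * (v1 * t) * (cos phi * p - sin phi * sin (v2 * t)).
  by rewrite /B /A /g cosD /p /q /a; ring.
have s0 : 0 <= s := Vt_ge0; have s1 : s <= 1 := Vt_le1.
have p_le : `|p| <= s ^+ 2.
  by apply: le_trans (ler_norm_cosB1 _) _; rewrite ler_pXn2r ?nnegrE ?norm_v2t_le.
have q_le : `|q| <= s ^+ 2.
  apply: le_trans (ler_norm_sinB _) _; apply: le_trans (_ : s ^+ 3 <= _).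
    by rewrite ler_pXn2r ?nnegrE ?norm_v2t_le.
  by rewrite exprSr ler_piMr ?exprn_ge0.
have sin_le : `|sin (v2 * t)| <= s := le_trans (ler_norm_sin _) norm_v2t_le.
have v1t_le : `|v1 * t| <= s := norm_v1t_le.
have a_le1 : `|a| <= 1 := ltW norm_a_lt1.
have X1 := ler_norm_cosM_sinMB phi p q.
have X2 := ler_norm_cosM_sinMB phi p (sin (v2 * t)).
rewrite BAE; apply: le_trans (ler_normD _ _) _.
rewrite (normrM a) (normrM (2 * _)) (normrM 2) (ger0_norm (_ : (0 : R) <= 2)) //.
have e1 : `|a| * `|cos phi * p - sin phi * q| <= 2 * s ^+ 2.
  by rewrite -[2 * _]mul1r; apply: ler_pM => //; lra.
have e2 : `|v1 * t| * `|cos phi * p - sin phi * sin (v2 * t)| <= s * (2 * s).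
  by apply: ler_pM => //; nra.
by lra.
Qed.

Lemma B_sub_A phi : `|B t phi - A phi| <= 9 * (V * t).
Proof.
have -> : B t phi - A phi = (B t phi - A phi - t * g phi) + t * g phi by ring.
apply: le_trans (ler_normD _ _) _.
have e1 : 6 * (V * t) ^+ 2 <= 6 * (V * t).
  by rewrite ler_wpM2l // expr2 ler_piMr ?Vt_ge0 ?Vt_le1.
have e2 : `|t * g phi| <= 3 * (V * t).
  by rewrite normrM (ger0_norm t_ge0) mulrC mulrA ler_wpM2r ?norm_g_le.
by have := B_sub_A_linear phi; lra.
Qed.

Lemma TQ_integrand_approx phi :
  `|(Num.sqrt (A phi) - Num.sqrt (B t phi)) ^+ 2 / 4
    - t ^+ 2 * (g phi ^+ 2 / (16 * A phi))|
    <= (6 + 81 / m) * 21 / (16 * m) * (V * t) ^+ 3.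
Proof.
have m0 := m_gt0.
have -> : t ^+ 2 * (g phi ^+ 2 / (16 * A phi)) = (t * g phi) ^+ 2 / (16 * A phi).
  by rewrite exprMn mulrA.
apply: le_trans (sqr_sqrtB_approx m0 (A_ge_m phi) (B_ge0 phi)
  (B_sub_A_linear phi) (B_sub_A phi)) _.
set s := V * t; have s0 : 0 <= s := Vt_ge0.
have tg_le : `|t * g phi| <= 3 * s.
  by rewrite normrM (ger0_norm t_ge0) mulrC mulrA ler_wpM2r ?norm_g_le.
have K0 : 0 <= (6 + 81 / m) / (16 * m).
  by rewrite divr_ge0 ?addr_ge0 ?divr_ge0 ?mulr_ge0 // ltW.
have -> : (6 * s ^+ 2 + (9 * s) ^+ 2 / m) * (2 * (9 * s) + `|t * g phi|) / (16 * m)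
    = (6 + 81 / m) / (16 * m) * s ^+ 2 * (18 * s + `|t * g phi|).
  by field; rewrite gt_eqF.
have -> : (6 + 81 / m) * 21 / (16 * m) * s ^+ 3
    = (6 + 81 / m) / (16 * m) * s ^+ 2 * (21 * s).
  by field; rewrite gt_eqF.
by rewrite ler_wpM2l ?(mulr_ge0 K0 (sqr_ge0 s)) //; lra.
Qed.

End SmallTime.
End Expansion.

Theorem lemmaA1 (R : realType) (r v1 v2 : R) :
  0 < r < 1 ->
  exists C : R, exists delta : R, 0 < delta /\
    forall t : R, 0 < t < delta ->
      `| TQ r (r + v1 * t) (v2 * t) - Gfun r v1 v2 * t ^+ 2 | <= C * t ^+ 3.
Proof.
move=> r01; pose V := `|v1| + `|v2| + 1; pose m := 1 - `|2 * r - 1|.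
have m0 : 0 < m := m_gt0 r01.
have V0 : 0 < V := lt_le_trans ltr01 (V_ge1 v1 v2).
exists ((6 + 81 / m) * 21 / (16 * m) * V ^+ 3), (m / (2 * V)); split.
  by rewrite divr_gt0 ?mulr_gt0.
move=> t /andP[t0]; rewrite ltr_pdivlMr ?mulr_gt0 // => t_small.
have Vt_small : 2 * (V * t) <= m by rewrite mulrA mulrC ltW.
rewrite /TQ /Gfun [X in _ - X]mulrC.
apply: (sup_image_approx (M := 9 * V ^+ 2 / (16 * m))).
- by exists 0; rewrite /= in_itv /= lexx mulr_gt0 // pi_gt0.
- exact: exprn_gt0.
- by move=> phi _; exact: G_integrand_le.
- move=> phi _; rewrite -[X in _ <= X]mulrA -exprMn.
  exact: (@TQ_integrand_approx R r v1 v2 r01 t (ltW t0) Vt_small phi).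
Qed.
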